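(* \textsc{Short Choice} is a total search problem: for every $n\ge 2$ and every instance (universe $U$ with $|U|=2^n-2$ and predicates $P_0,\dots,P_{n-2}$), a solution exists.
   Context: \textsc{Short Choice}: The universe $U$ is a set of $2^n-2$ objects, each represented by a distinct $n$-bit string. The input is a sequence of predicates $P_0,\dots,P_{n-2}$ given by poly($n$)-size circuits, with $P_i:U^{i+2}\to\{0,1\}$. A Long Choice subcertificate is a sequence of distinct elements $a_0,\dots,a_k\in U$ such that for every $i$ with $0\le i<k$ and every $j$ with $i<j\le k$, $P_i(a_0,\dots,a_i,a_j)=P_i(a_0,\dots,a_i,a_{i+1})$. An element $x\in U\setminus\{a_0,\dots,a_k\}$ extends the subcertificate if $a_0,\dots,a_k,x$ is again a Long Choice subcertificate. A solution of \textsc{Short Choice} consists of an integer $k$ with $0\le k\le n-2$, a Long Choice subcertificate $a_0,\dots,a_k$, and a bit $c\in\{0,1\}$ such that there is no $x$ extending $a_0,\dots,a_k$ with $P_k(a_0,\dots,a_k,x)=c$. *)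

From mathcomp Require Import all_boot.
Set Implicit Arguments. Unset Strict Implicit. Unset Printing Implicit Defensive.

Section ShortChoice.
Variable U : finType.
(* P i : U^(i+2) -> {0,1}  (only P 0 .. P (n-2) are ever used) *)
Variable P : forall i : nat, (i.+2).-tuple U -> bool.

(* (s_0, ..., s_i, x) as an (i+2)-tuple, for a sequence s with size s >= i+1 *)
Definition prefix_ext (i : nat) (s : seq U) (x : U) : (i.+2).-tuple U :=
  insubd (nseq_tuple i.+2 x) (rcons (take i.+1 s) x).

Definition subcert (k : nat) (a : (k.+1).-tuple U) : Prop :=
  uniq a /\
  forall i j : nat, i < j -> j <= k ->
    P (prefix_ext i a (nth (tnth a ord0) a j)) =
    P (prefix_ext i a (nth (tnth a ord0) a i.+1)).

Definition extends (k : nat) (a : (k.+1).-tuple U) (x : U) : Prop :=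
  x \notin a /\ subcert [tuple of rcons a x].

End ShortChoice.

(* Keep a subcertificate a_0..a_k together with the set S of its extensions.
   The extensions of a_0..a_k,y (y in S) are exactly the x in S \ {y} with
   P_k(..,x) = P_k(..,y), so choosing y in the smaller P_k-class of S at least
   halves S.  Hence |S| + 3 <= 2^(d+2), with d the number of steps left before
   k = n - 2, is preserved; it holds initially (|S| = 2^n - 3) and at d = 0 it
   forbids two nonempty classes, so some class is empty: a solution. *)
From mathcomp Require Import all_boot zify.

Section ShortChoiceTotal.
Context {U : finType}.
Variable P : forall i : nat, (i.+2).-tuple U -> bool.

(* [subcert] and [extends] on plain sequences; [z] is an arbitrary default for
   [nth], all reads being in range. *)
Definition subcert_seq (z : U) (s : seq U) : Prop :=
  uniq s /\ forall i j, i < j -> j < size s ->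
    P i (prefix_ext i s (nth z s j)) = P i (prefix_ext i s (nth z s i.+1)).

Definition extends_seq (z : U) (s : seq U) (x : U) : Prop :=
  x \notin s /\ subcert_seq z (rcons s x).

Lemma nth_rcons_small (z x : U) s i : i < size s -> nth z (rcons s x) i = nth z s i.
Proof. by rewrite nth_rcons => ->. Qed.

Lemma nth_rcons_size (z x : U) s : nth z (rcons s x) (size s) = x.
Proof. by rewrite nth_rcons ltnn eqxx. Qed.

Lemma prefix_ext_rcons i s (y x : U) :
  i < size s -> prefix_ext i (rcons s y) x = prefix_ext i s x.
Proof. by move=> lt_i_s; rewrite /prefix_ext -[rcons s y]cats1 takel_cat. Qed.

Lemma subcert_seqE {k} (a : (k.+1).-tuple U) z : subcert P a <-> subcert_seq z a.
Proof.
rewrite /subcert /subcert_seq size_tuple.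
split=> -[uniq_a Ha]; split=> // i j lt_ij le_jk.
- by rewrite !(set_nth_default (tnth a ord0) z) ?size_tuple; [apply: Ha|..]; lia.
- by rewrite !(set_nth_default z (tnth a ord0)) ?size_tuple; [apply: Ha|..]; lia.
Qed.

Lemma extends_seqE {k} (a : (k.+1).-tuple U) x z : extends P a x <-> extends_seq z a x.
Proof. by rewrite /extends (subcert_seqE [tuple of rcons a x] z). Qed.

Lemma subcert_seq_rcons z s x : subcert_seq z (rcons s x) <->
  [/\ uniq (rcons s x), subcert_seq z s & forall i, i.+1 < size s ->
     P i (prefix_ext i s x) = P i (prefix_ext i s (nth z s i.+1))].
Proof.
split.
- move=> [uniq_sx H]; split => //.
  + split=> [|i j lt_ij lt_js]; first by move: uniq_sx; rewrite rcons_uniq => /andP[].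
    have := H i j lt_ij; rewrite size_rcons !nth_rcons_small ?prefix_ext_rcons //; lia.
  + move=> i lt_is; have := H i (size s); rewrite size_rcons.
    rewrite nth_rcons_size nth_rcons_small ?prefix_ext_rcons //; lia.
- move=> [uniq_sx [_ Hs] Hx]; split=> // i j lt_ij; rewrite size_rcons => lt_js.
  rewrite !prefix_ext_rcons; try lia.
  have [lt_j|ge_j] := ltnP j (size s); first by rewrite !nth_rcons_small ?Hs //; lia.
  have -> : j = size s by lia.
  rewrite nth_rcons_size; have [lt_i|ge_i] := ltnP i.+1 (size s).
  + by rewrite nth_rcons_small ?Hx.
  + have -> : i.+1 = size s by lia.
    by rewrite nth_rcons_size.
Qed.

Lemma extends_seq_rcons {z : U} {k s y} (x : U) : size s = k.+1 -> extends_seq z s y ->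
  extends_seq z (rcons s y) x <->
  [/\ extends_seq z s x, x != y & P k (prefix_ext k s x) = P k (prefix_ext k s y)].
Proof.
move=> size_s [_ sc_sy].
have [uniq_sy sc_s _] := (subcert_seq_rcons z s y).1 sc_sy.
have lt_k_s : k < size s by rewrite size_s.
rewrite /extends_seq mem_rcons in_cons negb_or.
split.
- move=> [/andP[x_neq_y x_notin_s] /subcert_seq_rcons[_ _ Hx]].
  split=> //; last first.
    have := Hx k; rewrite size_rcons size_s !prefix_ext_rcons //.
    by rewrite -size_s nth_rcons_size; apply.
  split=> //; apply/subcert_seq_rcons; split=> //.
    by rewrite rcons_uniq x_notin_s; move: uniq_sy; rewrite rcons_uniq => /andP[].
  move=> i lt_is; have := Hx i; rewrite size_rcons.
  by rewrite !prefix_ext_rcons ?nth_rcons_small //; lia.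
- move=> [[x_notin_s /subcert_seq_rcons[_ _ Hx]] x_neq_y Pxy].
  split; first by rewrite x_neq_y.
  apply/subcert_seq_rcons; split=> //.
    by rewrite rcons_uniq mem_rcons in_cons negb_or x_neq_y x_notin_s.
  move=> i; rewrite size_rcons => lt_is; rewrite !prefix_ext_rcons; try lia.
  have [lt_i|ge_i] := ltnP i.+1 (size s); first by rewrite nth_rcons_small ?Hx.
  have -> : i = k by lia.
  by rewrite -size_s nth_rcons_size.
Qed.

Lemma subcert_singleton (a0 : U) : subcert P [tuple a0].
Proof. by apply/(subcert_seqE _ a0); split=> // i j; rewrite /=; lia. Qed.

Lemma extends_singleton (a0 x : U) : extends P [tuple a0] x <-> x \in [set~ a0].
Proof.
rewrite (extends_seqE _ _ a0) /extends_seq subcert_seq_rcons /= mem_seq1 in_setC1.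
split=> [[]//|x_neq_a0]; split=> //.
split=> [|| i //]; first by rewrite mem_seq1 eq_sym x_neq_a0.
by split=> // i j /=; lia.
Qed.

Definition ext_class {k} (a : (k.+1).-tuple U) (S : {set U}) (b : bool) : {set U} :=
  [set x in S | P k (prefix_ext k a x) == b].

Lemma card_ext_classes {k} (a : (k.+1).-tuple U) S :
  #|ext_class a S true| + #|ext_class a S false| = #|S|.
Proof.
rewrite -(cardsID [set x | P k (prefix_ext k a x)] S); congr (_ + _).
all: by apply: eq_card => x; rewrite !inE; case: (P k _); rewrite ?andbT ?andbF.
Qed.

Lemma extensions_rcons {k} {a : (k.+1).-tuple U} {S : {set U}} {y} :
  (forall x, extends P a x <-> x \in S) -> y \in S ->
  subcert P [tuple of rcons a y] /\
  forall x, extends P [tuple of rcons a y] x <->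
            x \in ext_class a S (P k (prefix_ext k a y)) :\ y.
Proof.
move=> HS /HS ext_y; split; first by case: ext_y.
move=> x; rewrite (extends_seqE _ _ y) /=.
rewrite (extends_seq_rcons x (size_tuple a) ((extends_seqE _ _ y).1 ext_y)).
rewrite !inE; have HSx := iff_trans (iff_sym (extends_seqE a x y)) (HS x).
by split=> [[/HSx-> -> ->]|/and3P[-> /HSx ? /eqP]]; rewrite ?eqxx.
Qed.

Definition short_choice_solution (n : nat) : Prop :=
  exists (k : nat) (a : (k.+1).-tuple U) (c : bool),
    [/\ k <= n - 2, subcert P a &
        ~ (exists x : U, extends P a x /\ P k (prefix_ext k a x) = c)].

Lemma ext_class0_solution n {k} {a : (k.+1).-tuple U} {S : {set U}} {c : bool} :
  k <= n - 2 -> subcert P a -> (forall x, extends P a x <-> x \in S) ->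
  ext_class a S c = set0 -> short_choice_solution n.
Proof.
move=> le_kn sc_a HS class0; exists k, a, c; split=> // -[x [/HS x_in_S Px]].
by move/setP/(_ x): class0; rewrite !inE x_in_S Px eqxx.
Qed.

Lemma short_choice_solution_from {n d k} {a : (k.+1).-tuple U} {S : {set U}} :
  subcert P a -> k + d = n - 2 -> (forall x, extends P a x <-> x \in S) ->
  #|S| + 3 <= 2 ^ d.+2 -> short_choice_solution n.
Proof.
elim: d k a S => [|d IH] k a S sc_a def_k HS card_S.
all: have [c /eqP class0|nonempty] := pickP (fun c => ext_class a S c == set0).
all: try by apply: (ext_class0_solution n _ sc_a HS class0); lia.
all: have class_gt0 b : 0 < #|ext_class a S b| by rewrite card_gt0 nonempty.
all: have card_classes := card_ext_classes a S.
  by have := class_gt0 true; have := class_gt0 false; move: card_S; rewrite expnS; lia.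
have [b small_b] : exists b, 2 * #|ext_class a S b| <= #|S|.
  case: (leqP #|ext_class a S true| #|ext_class a S false|).
  - by exists true; lia.
  - by exists false; lia.
have /card_gt0P [y y_in_class] := class_gt0 b.
have /setIdP [y_in_S /eqP Py] := y_in_class.
have [sc_ay HS_ay] := extensions_rcons HS y_in_S; rewrite Py in HS_ay.
apply: (IH k.+1 _ _ sc_ay _ HS_ay); first lia.
have := cardsD1 y (ext_class a S b); rewrite y_in_class.
by move: card_S; rewrite !expnS; lia.
Qed.

End ShortChoiceTotal.

Theorem theorem6 (n : nat) (U : finType)
    (P : forall i : nat, (i.+2).-tuple U -> bool) :
  2 <= n -> #|U| = 2 ^ n - 2 ->
  exists (k : nat) (a : (k.+1).-tuple U) (c : bool),
    [/\ k <= n - 2, subcert P a &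
        ~ (exists x : U, extends P a x /\ P k (prefix_ext k a x) = c)].
Proof.
move=> le2n card_U.
have le4_2n : 2 ^ 2 <= 2 ^ n by rewrite leq_pexp2l.
have /card_gt0P [a0 _] : 0 < #|U| by rewrite card_U; lia.
apply: (short_choice_solution_from P (d := n - 2) (subcert_singleton P a0) _
          (extends_singleton P a0)); first by rewrite add0n.
have -> : (n - 2).+2 = n by lia.
by rewrite cardsC1 card_U; lia.
Qed.
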